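(* Let $\lambda\in(1,\infty)\setminus\mathbb{N}$ and let $\phi:[0,1]\to(0,1]$ be a non-increasing function with $\phi(0)=1$ (so that $\omega(x)=\phi(|x|)$ for $|x|\le1$, $\omega(x)=0$ otherwise, is positive on its support $[-1,1]$). Then the subdivision scheme $S_{1,\mathbf{w}^\lambda}$ is uniformly convergent.
   Context: Put $w^\lambda_m=\phi(|m|/\lambda)$ for $m\in\mathbb{Z}$ with $|m|<\lambda$, and for $i\in\{0,1\}$ let $M_i=\{m\in\mathbb{Z}: m\equiv i \pmod 2,\ |m|<\lambda\}$. The scheme $S_{1,\mathbf{w}^\lambda}$ is the weighted local polynomial regression scheme of degree $1$: $(S\mathbf{f})_{2j+i}=\hat p(0)$ where $\hat p$ minimizes $\sum_{m\in M_i} w^\lambda_m (f_{j+(m+i)/2}-p(m))^2$ over polynomials $p$ of degree at most $1$ (it coincides with the degree-$0$ scheme). Explicitly, for $\mathbf{f}=(f_j)_{j\in\mathbb{Z}}$, $i\in\{0,1\}$, $j\in\mathbb{Z}$, \[ (S_{1,\mathbf{w}^\lambda}\mathbf{f})_{2j+i}=\frac{\sum_{m\in M_i} w^\lambda_m f_{j+(m+i)/2}}{\sum_{m\in M_i} w^\lambda_m}. \] Uniform convergence: for every bounded real sequence $\mathbf{f}^0$ there is a continuous $F$ with $\lim_{k\to\infty}\sup_j|(S^k\mathbf{f}^0)_j-F(2^{-k}j)|=0$. *)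

From Stdlib Require Import Reals ZArith List Lra Lia.
Open Scope R_scope.

(* Weight w^lambda_m = phi(|m|/lambda) (only used for |m| < lambda). *)
Definition wlam (lam : R) (phi : R -> R) (m : Z) : R :=
  phi (IZR (Z.abs m) / lam).

Definition ltb_abs (lam : R) (m : Z) : bool :=
  if Rlt_dec (IZR (Z.abs m)) lam then true else false.

(* Candidate integers -K .. K with K = up lam > lam (contains every m with |m| < lam). *)
Definition candidates (lam : R) : list Z :=
  let K := up lam in
  map (fun k : nat => (Z.of_nat k - K)%Z) (seq 0 (Z.to_nat (2 * K + 1))).

Definition Mset (lam : R) (i : Z) : list Z :=
  filter (fun m => andb (Z.eqb (Z.modulo m 2) i) (ltb_abs lam m)) (candidates lam).

Definition sumR (l : list R) : R := fold_right Rplus 0 l.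

Definition S1 (lam : R) (phi : R -> R) (f : Z -> R) (n : Z) : R :=
  let j := Z.div n 2 in
  let i := Z.modulo n 2 in
  sumR (map (fun m => wlam lam phi m * f (j + Z.div (m + i) 2)%Z) (Mset lam i))
  / sumR (map (wlam lam phi) (Mset lam i)).

Definition S1_iter (lam : R) (phi : R -> R) (k : nat) (f : Z -> R) : Z -> R :=
  Nat.iter k (S1 lam phi) f.

Definition uniformly_convergent (S : (Z -> R) -> (Z -> R)) : Prop :=
  forall f0 : Z -> R,
    (exists B : R, forall j : Z, Rabs (f0 j) <= B) ->
    exists F : R -> R, continuity F /\
      forall eps : R, eps > 0 -> exists K : nat, forall k : nat, (k >= K)%nat ->
        forall j : Z, Rabs (Nat.iter k S f0 j - F (IZR j / 2 ^ k)) <= eps.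

From Stdlib Require Import Reals ZArith List Lra Lia.
From Coquelicot Require Import Rcomplements.
Open Scope R_scope.

(* Let r be the largest integer below lam.  (S f)_n is an average, with
   weights in [phi 1, 1], of the values f_p with |2p - n| <= r.  Suppose f
   varies by at most D on every block of 2r consecutive integers.  For n in a
   block J, ..., J + 2r - 1, the values f_p used all lie in one such block, and
   every (S f)_n uses f_{p0}, p0 = (J + r) / 2, with weight share at least
   delta = phi 1 / #candidates; hence S f varies by at most (1 - delta) D on
   every block.  As f_{n/2} is among the values averaged into (S f)_n, the
   samples (S^k f)(floor (2^k x)) then move by O((1 - delta)^k) per step, and
   their limit is a continuous function to which S^k f converges uniformly. *)

Lemma sumR_nonneg (l : list Z) (h : Z -> R) :
  (forall m, In m l -> 0 <= h m) -> 0 <= sumR (map h l).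
Proof.
  induction l as [|a l IH]; simpl; intros H; [lra|].
  pose proof (H a (or_introl eq_refl)).
  assert (0 <= sumR (map h l)) by (apply IH; auto). lra.
Qed.

Lemma sumR_ge_elem (l : list Z) (h : Z -> R) (m0 : Z) :
  (forall m, In m l -> 0 <= h m) -> In m0 l -> h m0 <= sumR (map h l).
Proof.
  induction l as [|a l IH]; simpl; intros Hpos Hin; [contradiction|].
  pose proof (Hpos a (or_introl eq_refl)).
  assert (0 <= sumR (map h l)) by (apply sumR_nonneg; auto).
  destruct Hin as [<-|Hin]; [lra|].
  assert (h m0 <= sumR (map h l)) by (apply IH; auto). lra.
Qed.

Lemma sumR_le_length (l : list Z) (h : Z -> R) :
  (forall m, In m l -> h m <= 1) -> sumR (map h l) <= INR (length l).
Proof.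
  induction l as [|a l IH]; intros H; simpl map; simpl sumR; [simpl; lra|].
  change (length (a :: l)) with (S (length l)). rewrite S_INR.
  pose proof (H a (or_introl eq_refl)).
  assert (sumR (map h l) <= INR (length l))
    by (apply IH; intros m Hm; apply H; right; exact Hm).
  lra.
Qed.

Lemma sumR_weighted_affine (l : list Z) (w x : Z -> R) (a b : R) :
  sumR (map (fun m => w m * (a * x m + b)) l)
  = a * sumR (map (fun m => w m * x m) l) + b * sumR (map w l).
Proof. induction l as [|m l IH]; simpl; [ring|]. rewrite IH; ring. Qed.

Definition wavg (l : list Z) (w x : Z -> R) : R :=
  sumR (map (fun m => w m * x m) l) / sumR (map w l).

Lemma wavg_pull (l : list Z) (w x : Z -> R) (lo D rho : R) (m0 : Z) :
  (forall m, In m l -> 0 <= w m) ->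
  (forall m, In m l -> lo <= x m <= lo + D) ->
  In m0 l -> 0 < w m0 -> 0 <= rho -> rho * sumR (map w l) <= w m0 ->
  lo + rho * (x m0 - lo) <= wavg l w x <= lo + D - rho * (lo + D - x m0).
Proof.
  intros Hw Hx Hin Hw0 Hrho Hshare.
  assert (Hs : w m0 <= sumR (map w l)) by (apply sumR_ge_elem; auto).
  assert (Hterm : forall a b, (forall m, In m l -> 0 <= a * x m + b) ->
            w m0 * (a * x m0 + b)
            <= a * sumR (map (fun m => w m * x m) l) + b * sumR (map w l)).
  { intros a b Hab. rewrite <- sumR_weighted_affine.
    apply (sumR_ge_elem l (fun m => w m * (a * x m + b))); auto.
    intros m Hm. apply Rmult_le_pos; auto. }
  pose proof (Hterm 1 (- lo) ltac:(intros m Hm; specialize (Hx m Hm); lra)) as Hlow.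
  pose proof (Hterm (-1) (lo + D) ltac:(intros m Hm; specialize (Hx m Hm); lra)) as Hup.
  pose proof (Hx m0 Hin).
  unfold wavg.
  set (s := sumR (map w l)) in *.
  set (T := sumR (map (fun m => w m * x m) l)) in *.
  replace T with (T / s * s) in Hlow, Hup by (field; lra).
  set (avg := T / s) in *.
  split; apply (Rmult_le_reg_r s); nra.
Qed.

Lemma geometric_eventually_small (C g eps : R) :
  0 <= g < 1 -> 0 < eps -> exists N, forall k, (N <= k)%nat -> C * g ^ k < eps.
Proof.
  intros Hg Heps.
  assert (Hg1 : Rabs g < 1) by (rewrite Rabs_right; lra).
  assert (HC : 0 < Rabs C + 1) by (pose proof (Rabs_pos C); lra).
  destruct (pow_lt_1_zero g Hg1 (eps / (Rabs C + 1))) as [N HN];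
    [apply Rdiv_lt_0_compat; lra|].
  exists N. intros k Hk. specialize (HN k Hk).
  assert (Hgk : 0 <= g ^ k) by (apply pow_le; lra).
  rewrite Rabs_right in HN by lra.
  assert (HCk : C * g ^ k <= Rabs C * g ^ k)
    by (apply Rmult_le_compat_r; [lra | apply Rle_abs]).
  assert (Hsmall : (Rabs C + 1) * g ^ k < eps).
  { apply (Rmult_lt_compat_l (Rabs C + 1)) in HN; [|lra].
    replace ((Rabs C + 1) * (eps / (Rabs C + 1))) with eps in HN by (field; lra).
    exact HN. }
  lra.
Qed.

Section GeometricCauchy.

Variables (u : nat -> R) (a g : R).
Hypothesis g_range : 0 <= g < 1.
Hypothesis u_step : forall k, Rabs (u (S k) - u k) <= a * g ^ k.

Lemma geometric_tail k d : Rabs (u (k + d)%nat - u k) <= a / (1 - g) * g ^ k.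
Proof.
  assert (Ha : 0 <= a)
    by (specialize (u_step 0%nat); pose proof (Rabs_pos (u 1%nat - u 0%nat)); simpl in *; lra).
  assert (Hstrong : Rabs (u (k + d)%nat - u k) <= a / (1 - g) * (g ^ k - g ^ (k + d))).
  { induction d as [|d IH].
    - rewrite Nat.add_0_r, Rminus_diag, Rabs_R0, Rminus_diag. lra.
    - replace (k + S d)%nat with (S (k + d)) by lia.
      pose proof (Rabs_triang (u (S (k + d)) - u (k + d)%nat) (u (k + d)%nat - u k)) as Htri.
      replace (u (S (k + d)) - u (k + d)%nat + (u (k + d)%nat - u k))
        with (u (S (k + d)) - u k) in Htri by ring.
      assert (E : a / (1 - g) * (g ^ k - g ^ S (k + d))
                  = a / (1 - g) * (g ^ k - g ^ (k + d)) + a * g ^ (k + d))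
        by (simpl; field; lra).
      specialize (u_step (k + d)%nat). lra. }
  assert (0 <= a / (1 - g) * g ^ (k + d)).
  { apply Rmult_le_pos; [apply Rdiv_le_0_compat; lra | apply pow_le; lra]. }
  lra.
Qed.

Lemma geometric_limit : {l | forall k, Rabs (l - u k) <= a / (1 - g) * g ^ k}.
Proof.
  set (C := a / (1 - g)).
  assert (Hcauchy : Cauchy_crit u).
  { intros eps Heps.
    destruct (geometric_eventually_small (2 * C) g eps g_range Heps) as [N HN].
    exists N. intros n m Hn Hm. unfold R_dist.
    pose proof (geometric_tail N (n - N)) as Hnt.
    pose proof (geometric_tail N (m - N)) as Hmt.
    replace (N + (n - N))%nat with n in Hnt by lia.
    replace (N + (m - N))%nat with m in Hmt by lia.
    apply Rabs_le_between' in Hnt, Hmt.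
    specialize (HN N (le_n N)).
    apply Rabs_def1; fold C in Hnt, Hmt; lra. }
  destruct (R_complete u Hcauchy) as [l Hl]. exists l. intros k.
  apply Rle_plus_epsilon. intros eps Heps.
  destruct (Hl eps Heps) as [N HN].
  specialize (HN (k + N)%nat ltac:(lia)). unfold R_dist in HN.
  pose proof (geometric_tail k N) as Ht.
  pose proof (Rabs_triang (l - u (k + N)%nat) (u (k + N)%nat - u k)) as Htri.
  replace (l - u (k + N)%nat + (u (k + N)%nat - u k)) with (l - u k) in Htri by ring.
  rewrite Rabs_minus_sym in HN. fold C in Ht. lra.
Qed.

End GeometricCauchy.

Lemma Int_part_double (r : R) : (Int_part (2 * r) / 2)%Z = Int_part r.
Proof.
  destruct (base_Int_part r) as [A B]. destruct (base_Int_part (2 * r)) as [C D].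
  assert (E1 : (2 * Int_part r < Int_part (2 * r) + 1)%Z).
  { apply lt_IZR. rewrite mult_IZR, plus_IZR. simpl. lra. }
  assert (E2 : (Int_part (2 * r) < 2 * Int_part r + 2)%Z).
  { apply lt_IZR. rewrite plus_IZR, mult_IZR. simpl. lra. }
  Z.div_mod_to_equations. lia.
Qed.

Lemma Int_part_close (r s : R) : Rabs (r - s) < 1 -> (Z.abs (Int_part r - Int_part s) <= 1)%Z.
Proof.
  intros H. apply Rabs_def2 in H.
  destruct (base_Int_part r), (base_Int_part s).
  assert (Int_part r < Int_part s + 2)%Z by (apply lt_IZR; rewrite plus_IZR; simpl; lra).
  assert (Int_part s < Int_part r + 2)%Z by (apply lt_IZR; rewrite plus_IZR; simpl; lra).
  lia.
Qed.

Definition window_osc (L : Z) (f : Z -> R) (D : R) : Prop :=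
  forall J : Z, exists lo, forall p, (J <= p < J + L)%Z -> lo <= f p <= lo + D.

Lemma bounded_window_osc (L : Z) (f : Z -> R) (B : R) :
  (forall j, Rabs (f j) <= B) -> window_osc L f (2 * B).
Proof.
  intros HB J. exists (- B). intros p _.
  specialize (HB p). apply Rabs_le_between in HB. lra.
Qed.

Lemma window_osc_adjacent (L : Z) (f : Z -> R) (D : R) :
  (2 <= L)%Z -> window_osc L f D ->
  forall p q, (Z.abs (p - q) <= 1)%Z -> Rabs (f p - f q) <= D.
Proof.
  intros HL Hf p q Hpq. destruct (Hf (Z.min p q)) as [lo Hlo].
  pose proof (Hlo p ltac:(lia)). pose proof (Hlo q ltac:(lia)).
  apply Rabs_le_between. lra.
Qed.

Section WindowContraction.

Variables (scheme : (Z -> R) -> Z -> R) (L : Z) (g : R).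
Hypothesis L_ge2 : (2 <= L)%Z.
Hypothesis g_range : 0 <= g < 1.
Hypothesis scheme_contracts : forall f D, window_osc L f D -> window_osc L (scheme f) (g * D).
Hypothesis scheme_near_coarse :
  forall f D, window_osc L f D -> forall n, Rabs (scheme f n - f (n / 2)%Z) <= D.

Section Limit.

Variables (f0 : Z -> R) (D0 : R).
Hypothesis f0_osc : window_osc L f0 D0.

Lemma iter_window_osc k : window_osc L (Nat.iter k scheme f0) (D0 * g ^ k).
Proof.
  induction k as [|k IH]; simpl.
  - rewrite Rmult_1_r. exact f0_osc.
  - replace (D0 * (g * g ^ k)) with (g * (D0 * g ^ k)) by ring. now apply scheme_contracts.
Qed.

Definition dyadic_sample (x : R) (k : nat) : R := Nat.iter k scheme f0 (Int_part (2 ^ k * x)).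

Lemma dyadic_sample_step x k :
  Rabs (dyadic_sample x (S k) - dyadic_sample x k) <= D0 * g ^ k.
Proof.
  unfold dyadic_sample.
  replace (2 ^ S k * x) with (2 * (2 ^ k * x)) by (simpl; ring).
  rewrite <- (Int_part_double (2 ^ k * x)).
  exact (scheme_near_coarse _ _ (iter_window_osc k) _).
Qed.

Definition limit_fun (x : R) : R :=
  proj1_sig (geometric_limit (dyadic_sample x) D0 g g_range (dyadic_sample_step x)).

Lemma limit_fun_approx x k :
  Rabs (limit_fun x - dyadic_sample x k) <= D0 / (1 - g) * g ^ k.
Proof.
  unfold limit_fun.
  destruct (geometric_limit (dyadic_sample x) D0 g g_range (dyadic_sample_step x)) as [l Hl].
  apply Hl.
Qed.

Lemma limit_fun_continuous : continuity limit_fun.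
Proof.
  intros x eps Heps.
  destruct (geometric_eventually_small (2 * (D0 / (1 - g)) + D0) g eps g_range Heps) as [k Hk].
  specialize (Hk k (le_n k)).
  assert (H2k : 0 < 2 ^ k) by (apply pow_lt; lra).
  exists (/ 2 ^ k). split; [apply Rinv_0_lt_compat; lra|].
  intros y [_ Hy]. simpl in Hy |- *. unfold R_dist in Hy |- *.
  assert (Hscaled : Rabs (2 ^ k * y - 2 ^ k * x) < 1).
  { rewrite <- Rmult_minus_distr_l, Rabs_mult, (Rabs_right (2 ^ k)) by lra.
    apply (Rmult_lt_compat_l (2 ^ k)) in Hy; [|lra].
    rewrite Rinv_r in Hy; lra. }
  pose proof (window_osc_adjacent L _ _ L_ge2 (iter_window_osc k) _ _
                (Int_part_close _ _ Hscaled)) as Hadj.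
  pose proof (limit_fun_approx y k) as Hy'. pose proof (limit_fun_approx x k) as Hx'.
  unfold dyadic_sample in Hy', Hx'.
  apply Rabs_le_between' in Hy', Hx', Hadj.
  apply Rabs_def1; lra.
Qed.

Lemma iter_close_to_limit eps :
  0 < eps -> exists K : nat, forall k : nat, (k >= K)%nat ->
  forall j : Z, Rabs (Nat.iter k scheme f0 j - limit_fun (IZR j / 2 ^ k)) <= eps.
Proof.
  intros Heps.
  destruct (geometric_eventually_small (D0 / (1 - g)) g eps g_range Heps) as [K HK].
  exists K. intros k Hk j.
  pose proof (limit_fun_approx (IZR j / 2 ^ k) k) as Happrox.
  unfold dyadic_sample in Happrox.
  assert (H2k : 0 < 2 ^ k) by (apply pow_lt; lra).
  replace (2 ^ k * (IZR j / 2 ^ k)) with (IZR j) in Happrox by (field; lra).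
  rewrite <- (Int_part_spec (IZR j) j) in Happrox by lra.
  rewrite Rabs_minus_sym. specialize (HK k Hk). lra.
Qed.

End Limit.

Theorem window_contraction_uniformly_convergent : uniformly_convergent scheme.
Proof.
  intros f0 [B HB].
  pose proof (bounded_window_osc L f0 B HB) as Hosc.
  exists (limit_fun f0 (2 * B) Hosc). split.
  - apply limit_fun_continuous.
  - apply iter_close_to_limit.
Qed.

End WindowContraction.

Definition mask_radius (lam : R) : Z := (- up (- lam))%Z.

Lemma mask_radius_spec (lam : R) :
  IZR (mask_radius lam) < lam <= IZR (mask_radius lam) + 1.
Proof. unfold mask_radius. rewrite opp_IZR. destruct (archimed (- lam)). lra. Qed.

Lemma abs_lt_iff_le_radius (lam : R) (m : Z) :
  IZR (Z.abs m) < lam <-> (Z.abs m <= mask_radius lam)%Z.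
Proof.
  destruct (mask_radius_spec lam) as [Hlt Hle]. split; intros H.
  - assert (Z.abs m < mask_radius lam + 1)%Z; [|lia].
    apply lt_IZR. rewrite plus_IZR. simpl. lra.
  - apply IZR_le in H. lra.
Qed.

Lemma in_candidates (lam : R) (m : Z) : IZR (Z.abs m) < lam -> In m (candidates lam).
Proof.
  intros H. destruct (archimed lam) as [Hup _].
  assert (Z.abs m < up lam)%Z by (apply lt_IZR; lra).
  unfold candidates. apply in_map_iff. exists (Z.to_nat (m + up lam)). split.
  - rewrite Z2Nat.id by lia. lia.
  - apply in_seq. lia.
Qed.

Lemma in_Mset (lam : R) (i m : Z) :
  In m (Mset lam i) <-> (m mod 2 = i)%Z /\ (Z.abs m <= mask_radius lam)%Z.
Proof.
  rewrite <- abs_lt_iff_le_radius. unfold Mset, ltb_abs.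
  rewrite filter_In, Bool.andb_true_iff, Z.eqb_eq.
  destruct (Rlt_dec (IZR (Z.abs m)) lam); split; try tauto; try easy.
  intros [Hi Hm]. repeat split; auto using in_candidates.
Qed.

Lemma candidates_length_ge1 (lam : R) : 0 < lam -> 1 <= INR (length (candidates lam)).
Proof.
  intros Hlam. pose proof (in_candidates lam 0 ltac:(simpl; lra)) as H0.
  destruct (candidates lam) as [|m l]; [contradiction|].
  change (length (m :: l)) with (S (length l)). rewrite S_INR.
  pose proof (pos_INR (length l)). lra.
Qed.

Definition min_share (lam : R) (phi : R -> R) : R :=
  phi 1 / INR (length (candidates lam)).

Section WeightedScheme.

Variables (lam : R) (phi : R -> R).
Hypothesis lam_gt1 : 1 < lam.
Hypothesis phi_pos : forall x : R, 0 <= x <= 1 -> 0 < phi x <= 1.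
Hypothesis phi_noninc : forall x y : R, 0 <= x -> x <= y -> y <= 1 -> phi y <= phi x.

Local Notation r := (mask_radius lam).
Local Notation w := (wlam lam phi).

Lemma mask_radius_ge1 : (1 <= r)%Z.
Proof.
  destruct (mask_radius_spec lam).
  assert (0 < r)%Z by (apply lt_IZR; lra). lia.
Qed.

Lemma weight_bounds (m : Z) : (Z.abs m <= r)%Z -> phi 1 <= w m <= 1.
Proof.
  rewrite <- abs_lt_iff_le_radius. intros Hm. unfold wlam.
  assert (0 <= IZR (Z.abs m)) by (apply IZR_le; lia).
  assert (Ht : 0 <= IZR (Z.abs m) / lam <= 1).
  { split; [apply Rdiv_le_0_compat; lra|].
    apply (Rdiv_le_1 _ lam); lra. }
  pose proof (phi_noninc _ 1 (proj1 Ht) (proj2 Ht) (Rle_refl 1)).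
  pose proof (phi_pos _ Ht). lra.
Qed.

Lemma min_share_range : 0 < min_share lam phi <= 1.
Proof.
  unfold min_share. pose proof (candidates_length_ge1 lam ltac:(lra)).
  destruct (phi_pos 1 ltac:(lra)).
  split; [apply Rdiv_lt_0_compat | apply (Rdiv_le_1 (phi 1))]; lra.
Qed.

Lemma min_share_le_share (i m0 : Z) :
  In m0 (Mset lam i) -> min_share lam phi * sumR (map w (Mset lam i)) <= w m0.
Proof.
  intros Hm0.
  assert (Hw : forall m, In m (Mset lam i) -> phi 1 <= w m <= 1)
    by (intros m Hm; apply in_Mset in Hm; apply weight_bounds, Hm).
  assert (Hs : sumR (map w (Mset lam i)) <= INR (length (candidates lam))).
  { eapply Rle_trans.
    - apply sumR_le_length. intros m Hm. apply Hw, Hm.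
    - apply le_INR, filter_length_le. }
  pose proof (candidates_length_ge1 lam ltac:(lra)).
  pose proof (Hw m0 Hm0). destruct (phi_pos 1 ltac:(lra)).
  unfold min_share, Rdiv.
  rewrite Rmult_assoc, (Rmult_comm (/ _)).
  assert (sumR (map w (Mset lam i)) * / INR (length (candidates lam)) <= 1)
    by (apply (Rdiv_le_1 (sumR _)); lra).
  nra.
Qed.

Lemma S1_pull (f : Z -> R) (lo D : R) (J n m0 : Z) :
  (forall p, ((J - r + 1) / 2 <= p < (J - r + 1) / 2 + 2 * r)%Z -> lo <= f p <= lo + D) ->
  (J <= n < J + 2 * r)%Z -> In m0 (Mset lam (n mod 2)) ->
  let p := (n / 2 + (m0 + n mod 2) / 2)%Z in
  lo + min_share lam phi * (f p - lo) <= S1 lam phi f n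
  <= lo + D - min_share lam phi * (lo + D - f p).
Proof.
  intros Hf Hn Hm0 p.
  change (S1 lam phi f n)
    with (wavg (Mset lam (n mod 2)) w (fun m => f (n / 2 + (m + n mod 2) / 2)%Z)).
  pose proof min_share_range.
  assert (Hw : forall m, In m (Mset lam (n mod 2)) -> phi 1 <= w m <= 1)
    by (intros m Hm; apply in_Mset in Hm; apply weight_bounds, Hm).
  destruct (phi_pos 1 ltac:(lra)).
  apply (wavg_pull _ _ (fun m => f (n / 2 + (m + n mod 2) / 2)%Z) lo D _ m0).
  - intros m Hm. pose proof (Hw m Hm). lra.
  - intros m Hm. apply Hf. apply in_Mset in Hm. destruct Hm as [Hpar Hm].
    clear -Hn Hpar Hm. Z.div_mod_to_equations. lia.
  - exact Hm0.
  - pose proof (Hw m0 Hm0). lra.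
  - lra.
  - apply min_share_le_share, Hm0.
Qed.

Lemma S1_window_contract (f : Z -> R) (D : R) :
  window_osc (2 * r) f D ->
  window_osc (2 * r) (S1 lam phi f) ((1 - min_share lam phi) * D).
Proof.
  intros Hf J. destruct (Hf ((J - r + 1) / 2)%Z) as [lo Hlo].
  set (p0 := ((J + r) / 2)%Z).
  exists (lo + min_share lam phi * (f p0 - lo)). intros n Hn.
  assert (Hm0 : In (2 * p0 - n)%Z (Mset lam (n mod 2))).
  { apply in_Mset. unfold p0. clear -Hn. Z.div_mod_to_equations. lia. }
  pose proof (S1_pull f lo D J n _ Hlo Hn Hm0) as Hpull. cbv zeta in Hpull.
  replace (n / 2 + (2 * p0 - n + n mod 2) / 2)%Z with p0 in Hpull
    by (clear; Z.div_mod_to_equations; lia).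
  lra.
Qed.

Lemma S1_near_coarse (f : Z -> R) (D : R) :
  window_osc (2 * r) f D -> forall n, Rabs (S1 lam phi f n - f (n / 2)%Z) <= D.
Proof.
  intros Hf n. destruct (Hf ((n - r + 1) / 2)%Z) as [lo Hlo].
  pose proof mask_radius_ge1 as Hr.
  assert (Hm0 : In (- (n mod 2))%Z (Mset lam (n mod 2))).
  { apply in_Mset. clear -Hr. Z.div_mod_to_equations. lia. }
  pose proof (S1_pull f lo D n n _ Hlo ltac:(lia) Hm0) as Hpull. cbv zeta in Hpull.
  replace (n / 2 + (- (n mod 2) + n mod 2) / 2)%Z with (n / 2)%Z in Hpull
    by (clear; Z.div_mod_to_equations; lia).
  assert (Hc : lo <= f (n / 2)%Z <= lo + D).
  { apply Hlo. clear -Hr. Z.div_mod_to_equations. lia. }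
  pose proof min_share_range.
  apply Rabs_le_between'. nra.
Qed.

End WeightedScheme.

Theorem corollary4p2 (lam : R) (phi : R -> R)
  (Hlam1 : 1 < lam)
  (Hlam_nat : forall n : nat, lam <> INR n)
  (Hphi_pos : forall x : R, 0 <= x <= 1 -> 0 < phi x <= 1)
  (Hphi_noninc : forall x y : R, 0 <= x -> x <= y -> y <= 1 -> phi y <= phi x)
  (Hphi0 : phi 0 = 1) :
  uniformly_convergent (S1 lam phi).
Proof.
  pose proof (mask_radius_ge1 lam Hlam1).
  pose proof (min_share_range lam phi Hlam1 Hphi_pos).
  apply (window_contraction_uniformly_convergent _ (2 * mask_radius lam) (1 - min_share lam phi)).
  - lia.
  - lra.
  - exact (S1_window_contract lam phi Hlam1 Hphi_pos Hphi_noninc).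
  - exact (S1_near_coarse lam phi Hlam1 Hphi_pos Hphi_noninc).
Qed.
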